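(* Let $n$ be a positive odd integer and let $s$ be an integer with $0\leqslant s\leqslant (n-1)/2$. Then $$ \sum_{k=0}^{(n-1)/2}\frac{(aq;q^2)_k\,(q/a;q^2)_{k+s}}{(q^2;q^2)_k\,(q^2;q^2)_{k+s} } \equiv (-1)^{(n-1)/2}q^{(1-n^2)/4}\pmod{(1-aq^n)(a-q^n)}. $$
   Context: $a,q$ are indeterminates. The $q$-shifted factorial is $(y;q)_0=1$ and $(y;q)_m=(1-y)(1-yq)\cdots(1-yq^{m-1})$ for $m\geqslant1$. For rational functions $A,B$ and a polynomial $P$, $A\equiv B\pmod P$ means $A-B=P\cdot C/D$ for polynomials $C,D$ with $D$ coprime to $P$. *)

From HB Require Import structures.
From mathcomp Require Import all_boot all_order all_algebra fraction.
Set Implicit Arguments. Unset Strict Implicit. Unset Printing Implicit Defensive.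
Import Order.TTheory GRing.Theory Num.Theory.
Local Open Scope ring_scope.

(* Bivariate polynomial ring Q[a,q] as {poly {poly rat}}:
   q is the inner variable, a is the outer variable. *)
Definition Pol := {poly {poly rat}}.
Definition RatF := {fraction Pol}.

Definition qvar : Pol := 'X%:P.
Definition avar : Pol := 'X.

Definition qA : RatF := tofrac qvar.
Definition aA : RatF := tofrac avar.

Definition qpoch (R : pzRingType) (y q : R) (m : nat) : R :=
  \prod_(i < m) (1 - y * q ^+ i).

Definition pdvd (g p : Pol) : Prop := exists h : Pol, p = g * h.
Definition pcoprime (p d : Pol) : Prop :=
  forall g : Pol, pdvd g p -> pdvd g d -> g \is a GRing.unit.

Definition congr_mod (A B : RatF) (P : Pol) : Prop :=
  exists C D : Pol, D != 0 /\ pcoprime P D /\ A - B = tofrac (P * C) / tofrac D.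

(* Put m = (n - 1)/2.  Multiplying LHS - RHS by
   a^(m+s) q^(m(m+1)) (q^2;q^2)_m (q^2;q^2)_(m+s), which is coprime to the modulus, gives a
   polynomial N(a, q).  The modulus (1 - a q^n)(a - q^n) has the roots a = q^n and a = q^-n,
   and at both of them the sum is a terminating q-series equal to (-1)^m q^(-m(m+1)): a Gosper
   antidifference shows that the sum does not change when s moves by one, which reduces both
   evaluations to s = m at a = q^n, where only the term k = 0 survives and is a reversed
   q-Pochhammer quotient.  So N vanishes at both roots and pseudo-division by the modulus, whose
   leading coefficient -q^n is again coprime to it, yields the congruence. *)

From HB Require Import structures.
From mathcomp Require Import all_boot all_order all_algebra fraction.
From mathcomp Require Import ring zify.
Import GRing.Theory.
Set Implicit Arguments. Unset Strict Implicit. Unset Printing Implicit Defensive.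
Local Open Scope ring_scope.

Definition qprod (R : pzRingType) (y p : R) (lo hi : nat) : R :=
  \prod_(lo <= i < hi) (1 - y * p ^+ i).

Lemma qpochS (R : pzRingType) (y p : R) k :
  qpoch y p k.+1 = qpoch y p k * (1 - y * p ^+ k).
Proof. by rewrite /qpoch big_ord_recr. Qed.

Lemma qpoch_split (R : pzRingType) (y p : R) k m : (k <= m)%N ->
  qpoch y p m = qpoch y p k * qprod y p k m.
Proof.
move=> le_km; rewrite /qpoch /qprod -!(big_mkord xpredT (fun i => 1 - y * p ^+ i)).
by rewrite (big_cat_nat (leq0n k) le_km).
Qed.

Lemma qpoch_eq0 (R : pzRingType) (y p : R) i k :
  (i < k)%N -> y * p ^+ i = 1 -> qpoch y p k = 0.
Proof. by move=> lt_ik yp1; rewrite (qpoch_split _ _ lt_ik) qpochS yp1 subrr mulr0 mul0r. Qed.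

Section QPochMorph.
Variables (R S : pzRingType) (f : {rmorphism R -> S}).

Lemma rmorph_qprod y p lo hi : f (qprod y p lo hi) = qprod (f y) (f p) lo hi.
Proof.
by rewrite rmorph_prod; apply: eq_bigr => i _; rewrite rmorphB rmorph1 rmorphM rmorphXn.
Qed.

Lemma rmorph_qpoch y p k : f (qpoch y p k) = qpoch (f y) (f p) k.
Proof.
by rewrite rmorph_prod; apply: eq_bigr => i _; rewrite rmorphB rmorph1 rmorphM rmorphXn.
Qed.

End QPochMorph.

Section QSum.
Variables (F : fieldType) (p : F).
Hypothesis p_neq0 : p != 0.
Hypothesis p_not_unity : forall i, (0 < i)%N -> p ^+ i != 1.

Lemma expf_neq_ltn i j : (i < j)%N -> p ^+ j != p ^+ i.
Proof.
move=> lt_ij; rewrite -(subnK (ltnW lt_ij)) exprD -subr_eq0 -{2}[p ^+ i]mul1r -mulrBl.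
by rewrite mulf_eq0 expf_eq0 (negbTE p_neq0) andbF orbF subr_eq0 p_not_unity ?subn_gt0.
Qed.

Lemma qpoch_pp_neq0 k : qpoch p p k != 0.
Proof.
by apply/prodf_neq0 => i _; rewrite -exprS subr_eq0 eq_sym p_not_unity.
Qed.

Definition qterm (x y : F) s k :=
  qpoch x p k * qpoch y p (k + s) / (qpoch p p k * qpoch p p (k + s)).

(* Gosper antidifference of [qterm x y s k - qterm x y s.+1 k] in [k]. *)
Definition qterm_cert (x y : F) s k :=
  p ^+ s.+1 / (x - p ^+ s.+1) * (1 - p ^+ k) * qterm x y s k.

Lemma qterm_subS x y s k : x * y = p -> x != 0 -> x != p ^+ s.+1 ->
  qterm x y s k - qterm x y s.+1 k = qterm_cert x y s k.+1 - qterm_cert x y s k.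
Proof.
move=> xy x0; rewrite -subr_eq0 => xs.
have -> : y = p / x by rewrite -xy [x * y]mulrC mulfK.
rewrite /qterm_cert /qterm addnS addSn !qpochS.
have Q1 := qpoch_pp_neq0 k; have Q2 := qpoch_pp_neq0 (k + s).
have h1 : 1 - p * p ^+ k != 0 by rewrite -exprS subr_eq0 eq_sym p_not_unity.
have h2 : 1 - p * p ^+ (k + s) != 0 by rewrite -exprS subr_eq0 eq_sym p_not_unity.
rewrite exprD exprS in h2 xs; rewrite exprD !exprS.
move: (qpoch x p k) (qpoch (p / x) p (k + s)) => X Y in Q1 Q2 *.
move: (qpoch p p k) (qpoch p p (k + s)) (p ^+ k) (p ^+ s) => P1 P2 z w in Q1 Q2 h1 h2 xs *.
by field; rewrite Q1 Q2 h1 h2 xs x0.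
Qed.

Lemma sum_qtermS x y s m : x * y = p -> x != 0 -> x != p ^+ s.+1 ->
  qterm x y s m.+1 = 0 ->
  \sum_(k < m.+1) qterm x y s.+1 k = \sum_(k < m.+1) qterm x y s k.
Proof.
move=> xy x0 xs tm0; apply/eqP; rewrite eq_sym -subr_eq0 -sumrB.
rewrite -(big_mkord xpredT (fun k => qterm x y s k - qterm x y s.+1 k)).
rewrite (eq_bigr _ (fun k _ => qterm_subS k xy x0 xs)).
by rewrite telescope_sumr // /qterm_cert tm0 expr0 subrr !mulr0 mul0r subr0.
Qed.

Lemma prodr_opp_exprV m :
  \prod_(i < m) - (p ^+ i.+1)^-1 = (-1) ^+ m / p ^+ 'C(m.+1, 2).
Proof.
elim: m => [|m IH]; first by rewrite big_ord0 invr1 mulr1.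
rewrite big_ord_recr /= IH [in RHS]binS bin1 exprD.
move: (p ^+ 'C(m.+1, 2)) (expf_neq0 'C(m.+1, 2) p_neq0) => c c0.
by rewrite !exprS; field; rewrite c0 expf_neq0 // p_neq0.
Qed.

Lemma qpoch_exprV m :
  qpoch (p ^+ m)^-1 p m = (-1) ^+ m / p ^+ 'C(m.+1, 2) * qpoch p p m.
Proof.
rewrite -prodr_opp_exprV /qpoch -big_split /=.
rewrite -(big_mkord xpredT (fun i => 1 - (p ^+ m)^-1 * p ^+ i)) big_nat_rev big_mkord.
apply: eq_bigr => i _; rewrite add0n.
have -> : p ^+ m = p ^+ (m - i.+1) * p ^+ i.+1 by rewrite -exprD subnK.
have pi0 : p ^+ i != 0 by rewrite expf_neq0.
have pmi0 : p ^+ (m - i.+1) != 0 by rewrite expf_neq0.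
by rewrite exprS; field; rewrite pi0 pmi0 p_neq0.
Qed.

Lemma sum_qterm_exprSV m s : (s <= m)%N ->
  \sum_(k < m.+1) qterm (p ^+ m.+1) (p ^+ m)^-1 s k = (-1) ^+ m / p ^+ 'C(m.+1, 2).
Proof.
have pm0 : p ^+ m != 0 by rewrite expf_neq0.
have xy : p ^+ m.+1 * (p ^+ m)^-1 = p by rewrite exprS mulfK.
have y_trunc j : (m < j)%N -> qpoch (p ^+ m)^-1 p j = 0.
  by move=> lt_mj; apply: (qpoch_eq0 lt_mj); rewrite mulVf.
move=> le_sm; rewrite -(subKn le_sm).
elim: (m - s)%N (leq_subr s m) => [|d IH] le_dm.
  rewrite subn0 big_ord_recl big1 ?addr0 => [|k _].
    by rewrite /qterm /qpoch !big_ord0 -/(qpoch _ _ _) qpoch_exprV !mul1r mulfK ?qpoch_pp_neq0.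
  by rewrite /qterm y_trunc ?mulr0 ?mul0r // lift0 addSn ltnS leq_addl.
rewrite -IH ?(ltnW le_dm) //.
have -> : (m - d)%N = (m - d.+1).+1 by rewrite subnSK.
apply/esym/sum_qtermS => //.
- by rewrite expf_neq0.
- by rewrite expf_neq_ltn //; lia.
- by rewrite /qterm y_trunc ?mulr0 ?mul0r // addSn ltnS leq_addr.
Qed.

Lemma sum_qterm_exprVS m s :
  \sum_(k < m.+1) qterm (p ^+ m)^-1 (p ^+ m.+1) s k = (-1) ^+ m / p ^+ 'C(m.+1, 2).
Proof.
have pm0 : p ^+ m != 0 by rewrite expf_neq0.
have xy : (p ^+ m)^-1 * p ^+ m.+1 = p by rewrite exprS mulrCA mulVf ?mulr1.
elim: s => [|s IH].
  rewrite -(sum_qterm_exprSV (leq0n m)); apply: eq_bigr => k _.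
  by rewrite /qterm addn0 [qpoch (p ^+ m)^-1 p k * _]mulrC.
rewrite sum_qtermS ?invr_eq0 //.
- apply: contra_neq (p_not_unity (ltn0Sn (s + m))) => eq_pow.
  by rewrite -addSn exprD -eq_pow mulVf.
- by rewrite /qterm (qpoch_eq0 (ltnSn m)) ?mul0r ?mulVf.
Qed.

End QSum.

Definition qsum_denom (R : pzRingType) m s (q : R) : R :=
  q ^+ (m * m.+1) * qpoch (q ^+ 2) (q ^+ 2) m * qpoch (q ^+ 2) (q ^+ 2) (m + s).

(* [a ^ (m + s) * qsum_denom m s q * (LHS - RHS)] written without division, so that it is a
   polynomial when [a] and [q] are (see [qsum_numerE]). *)
Definition qsum_numer (R : pzRingType) m s (a q : R) : R :=
  \sum_(k < m.+1) qpoch (a * q) (q ^+ 2) k * \prod_(i < k + s) (a - q * (q ^+ 2) ^+ i)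
      * qprod (q ^+ 2) (q ^+ 2) k m * qprod (q ^+ 2) (q ^+ 2) (k + s) (m + s)
      * a ^+ (m - k) * q ^+ (m * m.+1)
  - (-1) ^+ m * a ^+ (m + s) * qpoch (q ^+ 2) (q ^+ 2) m * qpoch (q ^+ 2) (q ^+ 2) (m + s).

Section QSumMorph.
Variables (R S : pzRingType) (f : {rmorphism R -> S}).

Lemma rmorph_qsum_denom m s q : f (qsum_denom m s q) = qsum_denom m s (f q).
Proof. by rewrite !rmorphM !rmorph_qpoch !rmorphXn. Qed.

Lemma rmorph_qsum_numer m s a q : f (qsum_numer m s a q) = qsum_numer m s (f a) (f q).
Proof.
rewrite rmorphB rmorph_sum !rmorphM !rmorph_qpoch !rmorphXn rmorphN rmorph1.
congr (_ - _); apply: eq_bigr => k _.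
rewrite !rmorphM !rmorph_qpoch !rmorph_qprod !rmorphXn rmorphM rmorph_prod.
by congr (_ * _ * _ * _ * _ * _); apply: eq_bigr => i _; rewrite rmorphB rmorphM !rmorphXn.
Qed.

End QSumMorph.

Section QSumFrac.
Variables (F : fieldType) (a q : F).
Hypotheses (a_neq0 : a != 0) (q_neq0 : q != 0).
Hypothesis q_not_unity : forall i, (0 < i)%N -> q ^+ i != 1.

Lemma sqr_not_unity i : (0 < i)%N -> (q ^+ 2) ^+ i != 1.
Proof. by move=> i_gt0; rewrite -exprM q_not_unity // muln_gt0 i_gt0. Qed.

Lemma qsum_denom_neq0 m s : qsum_denom m s q != 0.
Proof. by rewrite !mulf_neq0 ?expf_neq0 ?qpoch_pp_neq0 //; apply: sqr_not_unity. Qed.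

Lemma exprn_qpoch_div j :
  a ^+ j * qpoch (q / a) (q ^+ 2) j = \prod_(i < j) (a - q * (q ^+ 2) ^+ i).
Proof.
elim: j => [|j IH]; first by rewrite /qpoch !big_ord0 mulr1.
rewrite qpochS big_ord_recr /= -IH exprS.
by move: (a ^+ j) (qpoch (q / a) (q ^+ 2) j) => A Q; field.
Qed.

Lemma qsum_numerE m s : qsum_numer m s a q = a ^+ (m + s) * qsum_denom m s q *
  (\sum_(k < m.+1) qterm (q ^+ 2) (a * q) (q / a) s k - (-1) ^+ m / q ^+ (m * m.+1)).
Proof.
have Q_neq0 := qpoch_pp_neq0 sqr_not_unity.
rewrite mulrBr mulr_sumr /qsum_numer; congr (_ - _).
  apply: eq_bigr => k _.
  have le_km : (k <= m)%N by rewrite -ltnS.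
  have le_ksms : (k + s <= m + s)%N by rewrite leq_add2r.
  rewrite /qsum_denom /qterm (qpoch_split _ _ le_km) (qpoch_split _ _ le_ksms).
  have -> : a ^+ (m + s) = a ^+ (k + s) * a ^+ (m - k).
    by rewrite -exprD; congr (_ ^+ _); lia.
  rewrite -exprn_qpoch_div.
  move: (Q_neq0 k) (Q_neq0 (k + s)%N).
  move: (qpoch (q ^+ 2) (q ^+ 2) k) (qpoch (q ^+ 2) (q ^+ 2) (k + s)) => X Y X0 Y0.
  by field; rewrite X0 Y0.
rewrite /qsum_denom.
move: (expf_neq0 (m * m.+1) q_neq0); move: (q ^+ (m * m.+1)) => Q Q0.
by field.
Qed.

End QSumFrac.

Lemma exprX2_bin2 (R : pzRingType) (q : R) m : (q ^+ 2) ^+ 'C(m.+1, 2) = q ^+ (m * m.+1).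
Proof.
rewrite -exprM; congr (_ ^+ _); elim: m => // m IH.
by rewrite binS bin1 mulnDr IH; lia.
Qed.

Section QSumEval.
Variables (F : fieldType) (x : F) (m s : nat).
Hypothesis x_neq0 : x != 0.
Hypothesis x_not_unity : forall i, (0 < i)%N -> x ^+ i != 1.

Lemma qsum_numer_at_expr : (s <= m)%N -> qsum_numer m s (x ^+ m.*2.+1) x = 0.
Proof.
move=> le_sm; rewrite qsum_numerE ?expf_neq0 //.
have -> : x ^+ m.*2.+1 * x = (x ^+ 2) ^+ m.+1 by rewrite -exprM -exprSr; congr (_ ^+ _); lia.
have -> : x / x ^+ m.*2.+1 = ((x ^+ 2) ^+ m)^-1.
  by rewrite -exprM exprSr invfM mulrCA divff // mulr1 mul2n.
rewrite sum_qterm_exprSV ?exprX2_bin2 ?subrr ?mulr0 ?expf_neq0 //.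
exact: sqr_not_unity.
Qed.

Lemma qsum_numer_at_exprV : qsum_numer m s (x ^+ m.*2.+1)^-1 x = 0.
Proof.
rewrite qsum_numerE ?invr_eq0 ?expf_neq0 //.
have -> : (x ^+ m.*2.+1)^-1 * x = ((x ^+ 2) ^+ m)^-1.
  by rewrite -exprM exprSr invfM divfK // mul2n.
have -> : x / (x ^+ m.*2.+1)^-1 = (x ^+ 2) ^+ m.+1.
  by rewrite invrK -exprM -exprS; congr (_ ^+ _); lia.
rewrite sum_qterm_exprVS ?exprX2_bin2 ?subrr ?mulr0 ?expf_neq0 //.
exact: sqr_not_unity.
Qed.

End QSumEval.

Lemma tofrac_inj (R : idomainType) : injective (@tofrac R).
Proof. by move=> x y /eqP; rewrite tofrac_eq => /eqP. Qed.

Lemma scale_dvdp_of_roots (R : idomainType) (N P : {poly R}) (rs : seq {fraction R}) :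
  P != 0 -> (size P <= (size rs).+1)%N -> uniq rs ->
  all (root (map_poly (@tofrac R) N)) rs -> all (root (map_poly (@tofrac R) P)) rs ->
  exists2 d : R, d != 0 & exists Q, d *: N = Q * P.
Proof.
move=> P_neq0 le_P_rs uniq_rs rootN rootP.
set d := lead_coef P ^+ scalp N P.
exists d; first by rewrite expf_neq0 ?lead_coef_eq0.
exists (N %/ P); rewrite Pdiv.Idomain.divp_eq.
suff -> : N %% P = 0 by rewrite addr0.
have r_eq : N %% P = d%:P * N - N %/ P * P.
  by rewrite mul_polyC Pdiv.Idomain.divp_eq addrC addKr.
have rootr : all (root (map_poly (@tofrac R) (N %% P))) rs.
  apply/allP => z z_rs; move: (allP rootN z z_rs) (allP rootP z z_rs).
  by rewrite r_eq !rootE rmorphB !rmorphM !hornerE /= => /eqP-> /eqP->; rewrite !mulr0 subrr.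
have := ltn_modp N P; rewrite P_neq0 => lt_rP.
apply/eqP; apply: contraTT lt_rP => r_neq0; rewrite -leqNgt.
rewrite (leq_trans le_P_rs) // -(size_map_inj_poly (@tofrac_inj R) (rmorph0 _)).
by apply: max_poly_roots; rewrite // map_poly_eq0_id0 ?lead_coef_eq0 // tofrac_eq0 lead_coef_eq0.
Qed.

Lemma pdvd_polyC (g : Pol) (w : {poly rat}) : w != 0 -> pdvd g w%:P -> g = (g`_0)%:P.
Proof.
move=> w_neq0 [h w_eq]; apply: size1_polyC.
have : g * h != 0 by rewrite -w_eq polyC_eq0.
rewrite mulf_eq0 negb_or => /andP[g_neq0 h_neq0].
have := size_mul g_neq0 h_neq0; rewrite -w_eq size_polyC w_neq0.
have := size_poly_gt0 h; rewrite h_neq0; case: (size h) => // k _; rewrite addnS /= => e.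
by rewrite (leq_trans (leq_addr k _)) // -e.
Qed.

Lemma pcoprime_Xn_polyC (c w : {poly rat}) j : c != 0 -> w != 0 ->
  pcoprime ((1 - avar * c%:P) * (avar - c%:P)) (avar ^+ j * w%:P).
Proof.
move=> c_neq0 w_neq0 g [h1 e1] [h2 e2].
set P := (1 - avar * c%:P) * (avar - c%:P) in e1 *.
set X := 1 + c%:P ^+ 2 - avar * c%:P.
set S := \sum_(i < j) (P + c%:P) ^+ (j.-1 - i) * c%:P ^+ i.
(* [P + c = a X], so [c ^ j = (a X) ^ j] modulo [P]. *)
have PcX : P + c%:P = avar * X by rewrite /P /X; ring.
have c_pow : c%:P ^+ j = (avar * X) ^+ j - P * S.
  by rewrite -PcX -[P in P * S](addrK c%:P) -subrXX opprB addrC subrK.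
have g_dvd : pdvd g (c ^+ j * w)%:P.
  exists (X ^+ j * h2 - h1 * S * w%:P).
  rewrite polyCM rmorphXn c_pow.
  transitivity (X ^+ j * (avar ^+ j * w%:P) - P * S * w%:P); first by rewrite exprMn; ring.
  by rewrite e2 e1; ring.
have g_const := pdvd_polyC (mulf_neq0 (expf_neq0 j c_neq0) w_neq0) g_dvd.
set g0 := g`_0 in g_const; clearbody g0; subst g.
have P_eval x : P.[x] = g0 * h1.[x] by rewrite e1 hornerCM.
(* The inverse comes from [P(1) - (2 - c) P(0) = (1 - c)^2 + (2 - c) c = 1]. *)
have g0_inv : g0 * (h1.[1] - (2%:R - c) * h1.[0]) = 1.
  have -> : g0 * (h1.[1] - (2%:R - c) * h1.[0]) = P.[1] - (2%:R - c) * P.[0] by rewrite !P_eval; ring.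
  by rewrite /P /avar !(hornerM, hornerD, hornerN, hornerX, hornerC); ring.
by apply/unitrPr; exists (h1.[1] - (2%:R - c) * h1.[0])%:P; rewrite -polyCM g0_inv.
Qed.

Lemma congr_mod_of_roots (A B : RatF) (c : {poly rat}) (N : Pol) j (w : {poly rat}) :
  c != 0 -> c ^+ 2 != 1 -> w != 0 ->
  A - B = tofrac N / tofrac (avar ^+ j * w%:P) ->
  root (map_poly (@tofrac _) N) (tofrac c) -> root (map_poly (@tofrac _) N) (tofrac c)^-1 ->
  congr_mod A B ((1 - avar * c%:P) * (avar - c%:P)).
Proof.
move=> c_neq0 c2_neq1 w_neq0 AB_eq rootc rootcV.
set P := (1 - avar * c%:P) * (avar - c%:P).
have P_0 : P.[0] = - c by rewrite /P /avar !(hornerM, hornerD, hornerN, hornerX, hornerC); ring.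
have P_neq0 : P != 0.
  by apply: contra_neq c_neq0 => P0; rewrite -[c]opprK -P_0 P0 horner0 oppr0.
have size_P : (size P <= 3)%N.
  have -> : P = ((- c)%:P * 'X + 1%:P) * ('X - c%:P).
    by rewrite /P /avar polyCN polyC1 mulNr [c%:P * 'X]mulrC addrC.
  apply: leq_trans (size_polyMleq _ _) _.
  rewrite size_XsubC size_MXaddC polyC_eq0 oppr_eq0 (negbTE c_neq0) size_polyC oppr_eq0 c_neq0.
  by [].
set z := tofrac c.
have z_neq0 : z != 0 by rewrite tofrac_eq0.
have uniq_z : uniq [:: z; z^-1].
  rewrite /= inE andbT; apply: contra_neq c2_neq1 => zV.
  by apply/(@tofrac_inj _); rewrite tofracXn -/z expr2 {2}zV mulfV.
have mapP : map_poly (@tofrac _) P = (1 - 'X * z%:P) * ('X - z%:P).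
  by rewrite /P /avar !(rmorphM, rmorphB, rmorph1) /= map_polyX map_polyC.
have rootP : all (root (map_poly (@tofrac _) P)) [:: z; z^-1].
  apply/allP => y; rewrite !inE mapP rootE !(hornerM, hornerD, hornerN, hornerX, hornerC).
  by case/orP => /eqP->; apply/eqP; [rewrite [z - z]subrr mulr0 | rewrite mulVf // subrr mul0r].
have rootN : all (root (map_poly (@tofrac _) N)) [:: z; z^-1].
  by apply/allP => y; rewrite !inE => /orP[] /eqP->; [exact: rootc | exact: rootcV].
have [d d_neq0 [Q dN_eq]] := scale_dvdp_of_roots (rs := [:: z; z^-1]) P_neq0 size_P uniq_z rootN rootP.
exists Q, (d%:P * (avar ^+ j * w%:P)); split; [|split].
- by rewrite mulf_neq0 ?polyC_eq0 // mulf_neq0 ?expf_neq0 ?polyC_eq0 // /avar polyX_eq0.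
- by rewrite mulrCA -polyCM; apply: pcoprime_Xn_polyC; rewrite ?mulf_neq0.
have dP_neq0 : tofrac d%:P != 0 :> RatF by rewrite tofrac_eq0 polyC_eq0.
rewrite AB_eq [P * Q]mulrC -dN_eq -mul_polyC (tofracM d%:P N) (tofracM d%:P (_ * _)).
by rewrite invfM mulrACA mulfV // mul1r.
Qed.

Lemma polyXn_neq1 (R : nzRingType) i : (0 < i)%N -> 'X^i != 1 :> {poly R}.
Proof.
case: i => // i _; apply/eqP => /(congr1 (fun p : {poly R} => size p)).
by rewrite size_polyXn size_poly1.
Qed.

Lemma tofrac_polyX_neq0 : tofrac ('X : {poly rat}) != 0.
Proof. by rewrite tofrac_eq0 polyX_eq0. Qed.

Lemma tofrac_polyX_not_unity i : (0 < i)%N -> tofrac ('X : {poly rat}) ^+ i != 1.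
Proof. by move=> i_gt0; rewrite -tofracXn -tofrac1 tofrac_eq polyXn_neq1. Qed.

Lemma aA_neq0 : aA != 0.
Proof. by rewrite tofrac_eq0 polyX_eq0. Qed.

Lemma qvarX i : qvar ^+ i = ('X^i)%:P.
Proof. by rewrite rmorphXn. Qed.

Lemma qA_neq0 : qA != 0.
Proof. by rewrite tofrac_eq0 polyC_eq0 polyX_eq0. Qed.

Lemma qA_not_unity i : (0 < i)%N -> qA ^+ i != 1.
Proof.
by move=> i_gt0; rewrite -tofracXn -tofrac1 tofrac_eq qvarX -polyC1 (inj_eq polyC_inj) polyXn_neq1.
Qed.

Lemma qsum_sub_frac m s :
  \sum_(k < m.+1) qterm (qA ^+ 2) (aA * qA) (qA / aA) s k - (-1) ^+ m / qA ^+ (m * m.+1)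
  = tofrac (qsum_numer m s avar qvar) / tofrac (avar ^+ (m + s) * (qsum_denom m s 'X)%:P).
Proof.
rewrite (rmorph_qsum_denom polyC) tofracM tofracXn rmorph_qsum_numer rmorph_qsum_denom.
have D_neq0 := mulf_neq0 (expf_neq0 (m + s) aA_neq0) (qsum_denom_neq0 qA_neq0 qA_not_unity m s).
by rewrite (qsum_numerE aA_neq0 qA_neq0 qA_not_unity) [RHS]mulrC (mulKf D_neq0).
Qed.

Lemma horner_map_qsum_numer m s (z : {fraction {poly rat}}) :
  (map_poly (@tofrac _) (qsum_numer m s avar qvar)).[z] = qsum_numer m s z (tofrac 'X).
Proof.
rewrite -horner_evalE !rmorph_qsum_numer /=.
by rewrite map_polyX map_polyC !horner_evalE hornerX hornerC.
Qed.

Lemma odd_double_half_pred n : odd n -> n = ((n.-1)./2).*2.+1.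
Proof.
case: n => // n; rewrite oddS => /negbTE n_even.
by rewrite -{1}(odd_double_half n) n_even.
Qed.

Lemma sqr_double_sub1_div4 m : (((m.*2.+1) ^ 2 - 1) %/ 4 = m * m.+1)%N.
Proof.
have -> : ((m.*2.+1) ^ 2 - 1 = 4 * (m * m.+1))%N by rewrite -mul2n; lia.
by rewrite mulKn.
Qed.

Theorem theorem4p4 (n s : nat) :
  (0 < n)%N -> odd n -> (s <= (n.-1)./2)%N ->
  congr_mod
    (\sum_(k < ((n.-1)./2).+1)
        (qpoch (aA * qA) (qA ^+ 2) k * qpoch (qA / aA) (qA ^+ 2) (k + s))
        / (qpoch (qA ^+ 2) (qA ^+ 2) k * qpoch (qA ^+ 2) (qA ^+ 2) (k + s)))
    ((-1) ^+ ((n.-1)./2) * qA ^- ((n ^ 2 - 1) %/ 4))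
    ((1 - avar * qvar ^+ n) * (avar - qvar ^+ n)).
Proof.
move=> n_gt0 /odd_double_half_pred n_eq.
set m := (n.-1)./2 in n_eq * => le_sm.
rewrite qvarX (_ : (n ^ 2 - 1) %/ 4 = m * m.+1)%N; last by rewrite n_eq sqr_double_sub1_div4.
apply: (congr_mod_of_roots _ _ _ (qsum_sub_frac m s)).
- by rewrite expf_neq0 // polyX_eq0.
- by rewrite -exprM polyXn_neq1 // muln_gt0 n_gt0.
- by rewrite -tofrac_eq0 rmorph_qsum_denom (qsum_denom_neq0 tofrac_polyX_neq0 tofrac_polyX_not_unity).
- apply/eqP; rewrite horner_map_qsum_numer tofracXn n_eq.
  exact: qsum_numer_at_expr tofrac_polyX_neq0 tofrac_polyX_not_unity le_sm.
- apply/eqP; rewrite horner_map_qsum_numer tofracXn n_eq.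
  exact: qsum_numer_at_exprV tofrac_polyX_neq0 tofrac_polyX_not_unity.
Qed.
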